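(* Let $\kappa$ be a cardinal (or ordinal), let $C_\alpha$ ($\alpha<\kappa$) be compact metric spaces, let $C=\prod_{\alpha<\kappa}C_\alpha$, and let $X\subseteq C$ and $r\colon C\to X$ be a continuous map with $r(x)=x$ for all $x\in X$. Let $S\subseteq\kappa$ be $r$-admissible. Then the map $p_S\colon X\to X_S$, $p_S(x)=x\restriction S$, where $X_S=\{x\restriction S: x\in X\}\subseteq \prod_{\alpha\in S}C_\alpha$, is an open retraction.
   Context: A set $S\subseteq\kappa$ is called $r$-admissible if for all $x,x'\in C$, $x\restriction S=x'\restriction S$ implies $r(x)\restriction S=r(x')\restriction S$. A retraction is a continuous map $f\colon X\to Y$ which has a continuous right inverse, i.e. there is a continuous $j\colon Y\to X$ with $f\circ j=\mathrm{id}_Y$. An open retraction is a retraction which is an open map. All spaces are completely regular. *)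

From HB Require Import structures.
From mathcomp Require Import all_boot all_order all_algebra.
From mathcomp Require Import all_classical all_reals all_analysis.
Unset Printing Implicit Defensive.
Import Order.TTheory GRing.Theory Num.Theory.
Local Open Scope classical_set_scope.

Definition open_map (T U : topologicalType) (f : T -> U) : Prop :=
  forall A : set T, open A -> open (f @` A).

Definition retraction (T U : topologicalType) (f : T -> U) : Prop :=
  continuous f /\ exists j : U -> T, continuous j /\ forall y, f (j y) = y.

Definition open_retraction (T U : topologicalType) (f : T -> U) : Prop :=
  retraction T U f /\ open_map T U f.

Section Restriction.
Context {K : Type} (C : K -> topologicalType).

Definition restr (S : set K) (x : prod_topology C) :
  prod_topology (fun a : set_type S => C (set_val a)) :=
  fun a => x (set_val a).

Definition restr_set (X : set (prod_topology C)) (S : set K) :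
  set (prod_topology (fun a : set_type S => C (set_val a))) :=
  restr S @` X.

Definition pS (X : set (prod_topology C)) (S : set K) (x : set_type X) :
  set_type (restr_set X S) :=
  @exist _ (fun y => y \in restr_set X S) (restr S (set_val x))
    (mem_set (imageP (restr S) (set_mem (svalP x)))).

Definition admissible (X : set (prod_topology C)) (r : prod_topology C -> set_type X)
  (S : set K) : Prop :=
  forall x x' : prod_topology C, restr S x = restr S x' ->
    restr S (set_val (r x)) = restr S (set_val (r x')).
End Restriction.
Arguments open_map {T U} f.
Arguments retraction {T U} f.
Arguments open_retraction {T U} f.
Arguments restr {K C} S x.
Arguments restr_set {K C} X S.
Arguments pS {K C} X S x.
Arguments admissible {K C} X r S.

From HB Require Import structures.
From mathcomp Require Import all_boot all_order all_algebra.
From mathcomp Require Import all_classical all_reals all_analysis.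
Local Open Scope classical_set_scope.

(* For x0 in X, the map y |-> r (y glued with x0 outside S) is a continuous
   section of p_S: admissibility says that r x |` S depends only on x |` S, and
   on points of X the map r is the identity.  It passes through x0, so p_S has a
   continuous section through every point of X, which makes it open. *)

(* The library's [proj_continuous] needs an [eqType] of indices; here the
   index type is arbitrary. *)
Section ProductTopology.
Context {I : Type} (T : I -> topologicalType).

Lemma prod_topology_proj_continuous (i : I) :
  continuous (fun f : prod_topology T => f i).
Proof.
move=> f; have [+ _] := @cvg_sup _ _ (fun i => Topological.class
    (initial_topology (fun f : (forall i, T i) => f i))) (nbhs f) f
  (@nbhs_filter (prod_topology T) f).
move=> /(_ cvg_id) cvg_f A /(@initial_continuous _ (T i) (fun g : (forall i, T i) => g i) f).
exact: cvg_f.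
Qed.

Lemma continuous_prod_topology {Y : topologicalType} (g : Y -> prod_topology T) :
  (forall i, continuous (fun y => g y i)) -> continuous g.
Proof.
move=> cg y; apply/(@cvg_sup _ _ (fun i => Topological.class
    (initial_topology (fun f : (forall i, T i) => f i)))) => i.
exact: (@continuous_comp_initial _ Y (T i) (fun f : (forall i, T i) => f i) g (cg i)).
Qed.

End ProductTopology.

Section Sections.
Context {T U : topologicalType} (f : T -> U).

Definition sections_through_points : Prop :=
  forall x, exists g : U -> T, [/\ continuous g, cancel g f & g (f x) = x].

Lemma open_map_of_sections : sections_through_points -> open_map f.
Proof.
move=> secf A oA; rewrite openE => _ [x Ax <-].
have [g [cg gK gfx]] := secf x.
have : nbhs (g (f x)) A by rewrite gfx; move: oA; rewrite openE; exact.
move=> /(cg (f x)) gA; apply: (@filterS _ _ _ (g @^-1` A)) gA => y Ay.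
by exists (g y); rewrite ?gK.
Qed.

Lemma open_retraction_of_sections :
  continuous f -> (forall y, exists x, f x = y) -> sections_through_points ->
  open_retraction f.
Proof.
move=> cf fsurj secf; split; last exact: open_map_of_sections.
split=> //; have [[y0 _]|U0] := pselect (exists y : U, True).
  have [x0 _] := fsurj y0; have [g [cg gK _]] := secf x0.
  by exists g.
have emptyU (y : U) : False by apply: U0; exists y.
by exists (fun y => False_rect _ (emptyU y)); split=> y; case: (emptyU y).
Qed.

End Sections.

Section Glue.
Context {K : Type} (C : K -> topologicalType) (S : set K).

Definition glue (z : prod_topology C)
    (y : prod_topology (fun a : set_type S => C (set_val a))) : prod_topology C :=
  fun a => match pselect (S a) with
           | left Sa => y (@exist _ (fun b => b \in S) a (mem_set Sa))
           | right _ => z a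
           end.

Lemma restr_glue z y : restr S (glue z y) = y.
Proof.
apply: functional_extensionality_dep => -[a Sa]; rewrite /restr /glue /=.
case: pselect => [Sa'|nSa]; last by exfalso; exact/nSa/set_mem.
by rewrite (bool_irrelevance (mem_set Sa') Sa).
Qed.

Lemma glue_restr x : glue x (restr S x) = x.
Proof. by apply: functional_extensionality_dep => a; rewrite /glue; case: pselect. Qed.

Lemma glue_continuous z : continuous (glue z).
Proof.
apply: continuous_prod_topology => a; rewrite /glue.
case: pselect => Sa; last exact: cst_continuous.
exact: (@prod_topology_proj_continuous _ (fun b : set_type S => C (set_val b))
  (@exist _ (fun b => b \in S) a (mem_set Sa))).
Qed.

Lemma restr_continuous : continuous (restr S : prod_topology C -> _).
Proof. by apply: continuous_prod_topology => a; exact: prod_topology_proj_continuous. Qed.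

End Glue.
Arguments glue {K C} S z y.

Section Projection.
Context {K : Type} {C : K -> topologicalType} (X : set (prod_topology C)) (S : set K).

Lemma pS_continuous : continuous (pS X S).
Proof.
apply: continuous_comp_initial.
have -> : set_val \o pS X S = restr S \o set_val by [].
move=> x; apply: continuous_comp.
  exact: initial_continuous.
exact: restr_continuous.
Qed.

Lemma pS_surj y : exists x, pS X S x = y.
Proof.
case: y => y XSy; have /set_mem[x Xx xy] := XSy.
by exists (@exist _ (fun z => z \in X) x (mem_set Xx)); apply: val_inj.
Qed.

Context (r : prod_topology C -> set_type X) (rcont : continuous r)
  (rfix : forall x : set_type X, r (set_val x) = x) (Sadm : admissible X r S).

Definition pS_section (x0 : set_type X) (y : set_type (restr_set X S)) : set_type X :=
  r (glue S (set_val x0) (set_val y)).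

Lemma pS_section_continuous x0 : continuous (pS_section x0).
Proof.
move=> y; apply: continuous_comp; last exact: rcont.
apply: continuous_comp; last exact: glue_continuous.
exact: initial_continuous.
Qed.

Lemma pS_sectionK x0 : cancel (pS_section x0) (pS X S).
Proof.
case=> y Xy_S; have /set_mem[x Xx xy] := Xy_S; apply: val_inj => /=.
have -> : restr S (set_val (pS_section x0 (exist _ y Xy_S))) = restr S (set_val (r x)).
  by apply: Sadm; rewrite restr_glue xy.
by rewrite (rfix (@exist _ (fun z => z \in X) x (mem_set Xx))).
Qed.

Lemma pS_section_pS x0 : pS_section x0 (pS X S x0) = x0.
Proof. by rewrite /pS_section /= glue_restr rfix. Qed.

End Projection.

Theorem lemma2p1 (R : realType) (K : Type) (C : K -> pseudoMetricType R)
  (Chaus : forall a, hausdorff_space (C a))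
  (Ccpt : forall a, compact [set: C a])
  (X : set (prod_topology C)) (r : prod_topology C -> set_type X)
  (rcont : continuous r)
  (rfix : forall x : set_type X, r (set_val x) = x)
  (S : set K) (Sadm : admissible X r S) :
  open_retraction (pS X S).
Proof.
apply: open_retraction_of_sections; [exact: pS_continuous | exact: pS_surj |].
move=> x0; exists (pS_section X S r x0); split.
- exact: pS_section_continuous X S r rcont x0.
- exact: pS_sectionK X S r rfix Sadm x0.
- exact: pS_section_pS X S r rfix x0.
Qed.
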